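(* Let $\mathcal{M}$ be a Riemannian submanifold of a Euclidean space, let $f:\mathcal{M}\times\mathbb{R}^n\to\mathbb{R}$, $\boldsymbol{c}=(c_1,\dots,c_p):\mathcal{M}\times\mathbb{R}^n\to\mathbb{R}^p$ and $\boldsymbol{g}=(g_1,\dots,g_s):\mathbb{R}^n\to\mathbb{R}^s$ be differentiable, and let $(\boldsymbol{x}^*,\boldsymbol{y}^* )$ be feasible, i.e. $\boldsymbol{x}^*\in\mathcal{M}$, $\boldsymbol{c}(\boldsymbol{x}^*,\boldsymbol{y}^* )=\boldsymbol{0}$, $\boldsymbol{g}(\boldsymbol{y}^* )\le\boldsymbol{0}$. Assume the LICQ holds at $\boldsymbol{z}^*=(\boldsymbol{x}^*,\boldsymbol{y}^* )$. Let $\epsilon\ge0$. If $\max\{m_x(\boldsymbol{x}^*,\boldsymbol{y}^* ),m_y(\boldsymbol{x}^*,\boldsymbol{y}^* )\}\le\epsilon$, then $(\boldsymbol{x}^*,\boldsymbol{y}^* )$ is an $\epsilon$-approximate first-order stationary point; and if $m_{KKT}(\boldsymbol{x}^*,\boldsymbol{y}^* )\le\epsilon$, then $(\boldsymbol{x}^*,\boldsymbol{y}^* )$ is an $\epsilon$-approximate first-order KKT point.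
   Context: Write $\mathcal{M}'=\mathcal{M}\times\mathbb{R}^n$ (product Riemannian manifold), $\boldsymbol{z}=(\boldsymbol{x},\boldsymbol{y})$, and $\bar f(\boldsymbol{z})=f(\boldsymbol{x},\boldsymbol{y})$, $\bar c_i(\boldsymbol{z})=c_i(\boldsymbol{x},\boldsymbol{y})$, $\bar g_j(\boldsymbol{z})=g_j(\boldsymbol{y})$. $\operatorname{grad}$ denotes the Riemannian gradient (with respect to $\boldsymbol{x}$ on $\mathcal{M}$ for $f,c_i$; on $\mathcal{M}'$ for $\bar f,\bar c_i,\bar g_j$), $\nabla_y$ the Euclidean gradient in $\boldsymbol{y}$, $\langle\cdot,\cdot\rangle_{\boldsymbol{x}}$ and $\|\cdot\|_{\boldsymbol{x}}$ the Riemannian metric and norm. $\mathcal{A}(\boldsymbol{y})=\{j: g_j(\boldsymbol{y})=0\}$. LICQ at $\boldsymbol{z}$: the vectors $\{\operatorname{grad}\bar c_i(\boldsymbol{z})\}_{i=1}^p\cup\{\operatorname{grad}\bar g_j(\boldsymbol{z})\}_{j\in\mathcal{A}(\boldsymbol{y})}$ are linearly independent in $T_{\boldsymbol{z}}\mathcal{M}'$. Measures: $m_x(\boldsymbol{x},\boldsymbol{y})=|\min\{\langle\operatorname{grad}f(\boldsymbol{x},\boldsymbol{y}),\boldsymbol{d}\rangle_{\boldsymbol{x}}:\boldsymbol{d}\in T_{\boldsymbol{x}}\mathcal{M},\ \langle\operatorname{grad}c_i(\boldsymbol{x},\boldsymbol{y}),\boldsymbol{d}\rangle_{\boldsymbol{x}}=0\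 \forall i,\ \|\boldsymbol{d}\|_{\boldsymbol{x}}\le1\}|$; $m_y(\boldsymbol{x},\boldsymbol{y})=|\min\{\langle\nabla_yf(\boldsymbol{x},\boldsymbol{y}),\boldsymbol{d}\rangle:\boldsymbol{d}\in\mathbb{R}^n,\ \langle\nabla_yc_i(\boldsymbol{x},\boldsymbol{y}),\boldsymbol{d}\rangle=0\ \forall i,\ \langle\nabla g_j(\boldsymbol{y}),\boldsymbol{d}\rangle\le0\ \forall j\in\mathcal{A}(\boldsymbol{y}),\ \|\boldsymbol{d}\|\le1\}|$; $m_{KKT}(\boldsymbol{x},\boldsymbol{y})=|\min\{\langle\operatorname{grad}\bar f(\boldsymbol{z}),\boldsymbol{d}\rangle_{\boldsymbol{z}}:\boldsymbol{d}\in T_{\boldsymbol{z}}\mathcal{M}',\ \langle\operatorname{grad}\bar c_i(\boldsymbol{z}),\boldsymbol{d}\rangle_{\boldsymbol{z}}=0\ \forall i,\ \langle\operatorname{grad}\bar g_j(\boldsymbol{z}),\boldsymbol{d}\rangle_{\boldsymbol{z}}\le0\ \forall j\in\mathcal{A}(\boldsymbol{y}),\ \|\boldsymbol{d}\|_{\boldsymbol{z}}\le1\}|$. A feasible $(\boldsymbol{x}^*,\boldsymbol{y}^* )$ is an $\epsilon$-approximate first-order stationary point if (a) there is $\boldsymbol{\lambda}\in\mathbb{R}^p$ with $\|\operatorname{grad}f(\boldsymbol{x}^*,\boldsymbol{y}^* )+\sum_i\lambda_i\operatorname{grad}c_i(\boldsymbol{x}^*,\boldsymbol{y}^* )\|_{\boldsymbol{x}^*}\le\epsilon$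 and (b) there are $\boldsymbol{\lambda}'\in\mathbb{R}^p$, $\boldsymbol{\mu}\in\mathbb{R}^s_+$ with $\|\nabla_yf+\sum_i\lambda'_i\nabla_yc_i+\sum_j\mu_j\nabla g_j\|\le\epsilon$ at $(\boldsymbol{x}^*,\boldsymbol{y}^* )$ and $\mu_jg_j(\boldsymbol{y}^* )=0$ for all $j$. It is an $\epsilon$-approximate first-order KKT point if there are $\boldsymbol{\lambda}\in\mathbb{R}^p$, $\boldsymbol{\mu}\in\mathbb{R}^s_+$ with $\|\operatorname{grad}\bar f(\boldsymbol{z}^* )+\sum_i\lambda_i\operatorname{grad}\bar c_i(\boldsymbol{z}^* )+\sum_j\mu_j\operatorname{grad}\bar g_j(\boldsymbol{z}^* )\|_{\boldsymbol{z}^*}\le\epsilon$ and $\mu_j\bar g_j(\boldsymbol{z}^* )=0$ for all $j$. *)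

From HB Require Import structures.
From mathcomp Require Import all_boot all_order all_algebra.
From mathcomp Require Import all_classical all_reals all_analysis.
Set Implicit Arguments. Unset Strict Implicit. Unset Printing Implicit Defensive.
Import Order.TTheory GRing.Theory Num.Theory.
Import numFieldNormedType.Exports.
Local Open Scope classical_set_scope.
Local Open Scope ring_scope.

Section Defs.
Variable R : realType.

Definition inner {K : nat} (u v : 'rV[R]_K) : R := \sum_(i < K) u 0 i * v 0 i.
Definition enorm {K : nat} (u : 'rV[R]_K) : R := Num.sqrt (inner u u).

Definition egrad {K : nat} (f : 'rV[R]_K -> R) (x : 'rV[R]_K) : 'rV[R]_K :=
  \row_(i < K) derive f x (delta_mx 0 i).

(* h : R^K -> R^m is a local defining function of M at x on the open
   neighbourhood U: h is C^1 on U (continuous partial derivatives), Dh(x)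
   is surjective (Jacobian of rank m), and M /\ U = h^{-1}(0) /\ U. *)
Definition local_defining_fun {K m : nat} (M : set 'rV[R]_K) (x : 'rV[R]_K)
    (h : 'rV[R]_K -> 'rV[R]_m) (U : set 'rV[R]_K) : Prop :=
  [/\ open U /\ U x,
      (forall y, U y -> differentiable h y),
      (forall (i : 'I_K) y, U y ->
          {for y, continuous (fun z => derive h z (delta_mx 0 i))}),
      \rank (\matrix_(i < K) derive h x (delta_mx 0 i)) = m
    & (forall y, U y -> (M y <-> h y = 0))].

(* embedded (hence Riemannian, with the induced Euclidean metric)
   submanifold of R^K *)
Definition is_submanifold {K : nat} (M : set 'rV[R]_K) : Prop :=
  forall x, M x -> exists (m : nat) (h : 'rV[R]_K -> 'rV[R]_m) U,
    local_defining_fun M x h U.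

Definition tangent {K : nat} (M : set 'rV[R]_K) (x : 'rV[R]_K) : set 'rV[R]_K :=
  [set d | forall (m : nat) (h : 'rV[R]_K -> 'rV[R]_m) U,
     local_defining_fun M x h U -> derive h x d = 0].

(* Riemannian gradient on M (induced metric): orthogonal projection of the
   Euclidean gradient onto T_x M *)
Definition rgrad {K : nat} (M : set 'rV[R]_K) (f : 'rV[R]_K -> R) (x : 'rV[R]_K)
  : 'rV[R]_K :=
  xget 0 [set gr | tangent M x gr /\
            forall d, tangent M x d -> inner (egrad f x - gr) d = 0].

(* Product manifold M' = M x R^n: tangent space T_x M x R^n, product metric *)
Definition ptangent {K n : nat} (M : set 'rV[R]_K) (x : 'rV[R]_K)
  : set ('rV[R]_K * 'rV[R]_n) := [set d | tangent M x d.1].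
Definition pinner {K n : nat} (u v : 'rV[R]_K * 'rV[R]_n) : R :=
  inner u.1 v.1 + inner u.2 v.2.
Definition pnorm {K n : nat} (u : 'rV[R]_K * 'rV[R]_n) : R := Num.sqrt (pinner u u).

Definition pgrad {K n : nat} (M : set 'rV[R]_K) (F : 'rV[R]_K -> 'rV[R]_n -> R)
    (x : 'rV[R]_K) (y : 'rV[R]_n) : 'rV[R]_K * 'rV[R]_n :=
  xget (0, 0) [set gr | ptangent M x gr /\
     forall d, ptangent M x d ->
       pinner (egrad (F ^~ y) x - gr.1, egrad (F x) y - gr.2) d = 0].

Definition LICQ {K n p s : nat} (M : set 'rV[R]_K)
    (c : 'I_p -> 'rV[R]_K -> 'rV[R]_n -> R) (g : 'I_s -> 'rV[R]_n -> R)
    (x : 'rV[R]_K) (y : 'rV[R]_n) : Prop :=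
  forall (a : 'I_p -> R) (b : 'I_s -> R),
    (\sum_(i < p) a i *: (pgrad M (c i) x y).1
       + \sum_(j < s | g j y == 0) b j *: (pgrad M (fun _ => g j) x y).1 = 0 /\
     \sum_(i < p) a i *: (pgrad M (c i) x y).2
       + \sum_(j < s | g j y == 0) b j *: (pgrad M (fun _ => g j) x y).2 = 0) ->
    (forall i, a i = 0) /\ (forall j, g j y = 0 -> b j = 0).

(* the measures; the minima are over compact nonempty sets, written as inf *)
Definition m_x {K n p : nat} (M : set 'rV[R]_K) (f : 'rV[R]_K -> 'rV[R]_n -> R)
    (c : 'I_p -> 'rV[R]_K -> 'rV[R]_n -> R) (x : 'rV[R]_K) (y : 'rV[R]_n) : R :=
  `| inf [set r | exists d, [/\ tangent M x d,
        (forall i, inner (rgrad M (c i ^~ y) x) d = 0),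
        enorm d <= 1 & r = inner (rgrad M (f ^~ y) x) d]] |.

Definition m_y {K n p s : nat} (f : 'rV[R]_K -> 'rV[R]_n -> R)
    (c : 'I_p -> 'rV[R]_K -> 'rV[R]_n -> R) (g : 'I_s -> 'rV[R]_n -> R)
    (x : 'rV[R]_K) (y : 'rV[R]_n) : R :=
  `| inf [set r | exists d : 'rV[R]_n, [/\
        (forall i, inner (egrad (c i x) y) d = 0),
        (forall j, g j y = 0 -> inner (egrad (g j) y) d <= 0),
        enorm d <= 1 & r = inner (egrad (f x) y) d]] |.

Definition m_KKT {K n p s : nat} (M : set 'rV[R]_K) (f : 'rV[R]_K -> 'rV[R]_n -> R)
    (c : 'I_p -> 'rV[R]_K -> 'rV[R]_n -> R) (g : 'I_s -> 'rV[R]_n -> R)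
    (x : 'rV[R]_K) (y : 'rV[R]_n) : R :=
  `| inf [set r | exists d : 'rV[R]_K * 'rV[R]_n, [/\ ptangent M x d,
        (forall i, pinner (pgrad M (c i) x y) d = 0),
        (forall j, g j y = 0 -> pinner (pgrad M (fun _ => g j) x y) d <= 0),
        pnorm d <= 1 & r = pinner (pgrad M f x y) d]] |.

Definition approx_stationary {K n p s : nat} (M : set 'rV[R]_K)
    (f : 'rV[R]_K -> 'rV[R]_n -> R) (c : 'I_p -> 'rV[R]_K -> 'rV[R]_n -> R)
    (g : 'I_s -> 'rV[R]_n -> R) (eps : R) (x : 'rV[R]_K) (y : 'rV[R]_n) : Prop :=
  (exists lam : 'I_p -> R,
     enorm (rgrad M (f ^~ y) x + \sum_(i < p) lam i *: rgrad M (c i ^~ y) x) <= eps) /\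
  (exists (lam' : 'I_p -> R) (mu : 'I_s -> R), (forall j, 0 <= mu j) /\
     enorm (egrad (f x) y + \sum_(i < p) lam' i *: egrad (c i x) y
            + \sum_(j < s) mu j *: egrad (g j) y) <= eps /\
     (forall j, mu j * g j y = 0)).

Definition approx_KKT {K n p s : nat} (M : set 'rV[R]_K)
    (f : 'rV[R]_K -> 'rV[R]_n -> R) (c : 'I_p -> 'rV[R]_K -> 'rV[R]_n -> R)
    (g : 'I_s -> 'rV[R]_n -> R) (eps : R) (x : 'rV[R]_K) (y : 'rV[R]_n) : Prop :=
  exists (lam : 'I_p -> R) (mu : 'I_s -> R), (forall j, 0 <= mu j) /\
    pnorm ((pgrad M f x y).1 + \sum_(i < p) lam i *: (pgrad M (c i) x y).1
             + \sum_(j < s) mu j *: (pgrad M (fun _ => g j) x y).1,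
           (pgrad M f x y).2 + \sum_(i < p) lam i *: (pgrad M (c i) x y).2
             + \sum_(j < s) mu j *: (pgrad M (fun _ => g j) x y).2) <= eps /\
    (forall j, mu j * g j y = 0).

End Defs.

From HB Require Import structures.
From mathcomp Require Import all_boot all_order all_algebra.
From mathcomp Require Import all_classical all_reals all_analysis.
From mathcomp Require Import ring lra.
Set Implicit Arguments. Unset Strict Implicit. Unset Printing Implicit Defensive.
Import Order.TTheory GRing.Theory Num.Theory.
Import numFieldNormedType.Exports.
Local Open Scope classical_set_scope.
Local Open Scope ring_scope.

(* Each measure is |min <v, d>| over the unit
   directions d of a subspace T with <a_i, d> = 0 and <b_j, d> <= 0 for the
   active constraints j.  Splitting every equality into two inequalities, let
   u = v + sum_k mu_k e_k be the residual of the nonnegative least-squares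
   problem min_{mu >= 0} |v + sum_k mu_k e_k|; a minimiser exists by the
   active-set argument (the best of the finitely many orthogonal projections
   onto spans of subfamilies that have nonnegative coefficients).  Its KKT
   conditions <u, e_k> >= 0 and mu_k <u, e_k> = 0 make d = -u/|u| feasible with
   <v, d> = -|u|, so |u| is at most the measure, and mu are the multipliers. *)

Definition semi_inner_product (R : numDomainType) (V : lmodType R) (ip : V -> V -> R) :=
  [/\ forall x y z, ip (x + y) z = ip x z + ip y z,
      forall a x z, ip (a *: x) z = a * ip x z,
      forall x y, ip x y = ip y x &
      forall x, 0 <= ip x x].

Lemma ge0_of_ge0_near0 (R : realFieldType) (a b T : R) : 0 < T ->
  (forall t, 0 < t -> t <= T -> 0 <= a + t * b) -> 0 <= a.
Proof.
move=> T0 near0; apply/ler_addgt0Pr => eps eps0.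
pose q := eps / (`|b| + 1).
have b1 : 0 < `|b| + 1 := ltr_wpDl (normr_ge0 b) ltr01.
have q0 : 0 < q by rewrite divr_gt0.
have qb : q * `|b| + q = eps by rewrite -{2}(mulr1 q) -mulrDr divfK ?gt_eqF.
pose t := Num.min T q.
have t0 : 0 < t by rewrite lt_min T0 q0.
have tq : t <= q by rewrite ge_min lexx orbT.
have tb : t * b <= q * `|b|.
  by apply: le_trans (ler_wpM2l (ltW t0) (ler_norm b)) _; rewrite ler_wpM2r.
have := near0 t t0; rewrite ge_min lexx => /(_ isT); lra.
Qed.

Lemma ratio_test (R : realFieldType) (I : finType) (mu c : I -> R) (k0 : I) :
  (forall k, 0 <= mu k) -> c k0 < 0 ->
  exists j t, [/\ c j < 0, 0 <= t <= 1, mu j + t * (c j - mu j) = 0 &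
                 forall k, 0 <= mu k + t * (c k - mu k)].
Proof.
move=> mu0 ck0.
have gap k : c k < 0 -> 0 < mu k - c k by move=> ck; have := mu0 k; lra.
pose F k := mu k / (mu k - c k).
have [j cj jmin] := arg_minP F (P := fun k => c k < 0) ck0.
have gapj := gap j cj; have muj := mu0 j.
have Fj01 : 0 <= F j <= 1.
  by rewrite /F divr_ge0 ?(ltW gapj) //= ler_pdivrMr // mul1r; lra.
exists j, (F j); split => //; first by rewrite /F; field; rewrite gt_eqF.
move=> k; have [ck | ck] := ltP (c k) 0.
  have := jmin k ck; rewrite {2}/F ler_pdivlMr ?gap // => Fk.
  suff -> : mu k + F j * (c k - mu k) = mu k - F j * (mu k - c k) by lra.
  by ring.
have := mu0 k; nra.
Qed.

Section LinearCombination.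
Variables (R : nzRingType) (V : lmodType R) (I : finType) (e : I -> V).

Definition lcomb (mu : I -> R) : V := \sum_k mu k *: e k.

Lemma lcombD a b : lcomb (fun k => a k + b k) = lcomb a + lcomb b.
Proof. by rewrite /lcomb -big_split; apply: eq_bigr => k _; rewrite scalerDl. Qed.

Lemma lcombB a b : lcomb (fun k => a k - b k) = lcomb a - lcomb b.
Proof. by rewrite /lcomb -sumrB; apply: eq_bigr => k _; rewrite scalerBl. Qed.

Lemma lcombZ t a : lcomb (fun k => t * a k) = t *: lcomb a.
Proof. by rewrite /lcomb scaler_sumr; apply: eq_bigr => k _; rewrite scalerA. Qed.

Lemma lcomb_delta j : lcomb (fun k => (k == j)%:R) = e j.
Proof.
rewrite /lcomb (bigD1 j) //= eqxx scale1r big1 ?addr0 // => k /negbTE ->.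
exact: scale0r.
Qed.

End LinearCombination.

Section SemiInnerProduct.
Variables (R : realFieldType) (V : lmodType R) (ip : V -> V -> R).
Hypothesis ipP : semi_inner_product ip.

Lemma ipDl x y z : ip (x + y) z = ip x z + ip y z. Proof. by case: ipP. Qed.
Lemma ipZl a x z : ip (a *: x) z = a * ip x z. Proof. by case: ipP. Qed.
Lemma ipC x y : ip x y = ip y x. Proof. by case: ipP. Qed.
Lemma ip_ge0 x : 0 <= ip x x. Proof. by case: ipP. Qed.

Lemma ipDr x y z : ip z (x + y) = ip z x + ip z y.
Proof. by rewrite !(ipC z) ipDl. Qed.

Lemma ipZr a x z : ip z (a *: x) = a * ip z x.
Proof. by rewrite !(ipC z) ipZl. Qed.

Lemma ip0r z : ip z 0 = 0.
Proof. by rewrite -(scale0r 0) ipZr mul0r. Qed.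

Lemma ipNl x z : ip (- x) z = - ip x z.
Proof. by rewrite -scaleN1r ipZl mulN1r. Qed.

Lemma ip_suml (J : finType) (F : J -> V) z : ip (\sum_j F j) z = \sum_j ip (F j) z.
Proof.
apply: (big_morph (ip^~ z) (fun x y => ipDl x y z)).
by rewrite -(scale0r 0) ipZl mul0r.
Qed.

Lemma ip_sumr (J : finType) (F : J -> V) z : ip z (\sum_j F j) = \sum_j ip z (F j).
Proof. by rewrite ipC ip_suml; apply: eq_bigr => j _; rewrite ipC. Qed.

Lemma ip_sqrD x y : ip (x + y) (x + y) = ip x x + 2 * ip x y + ip y y.
Proof. by rewrite ipDl !ipDr (ipC y x); ring. Qed.

Lemma ip_sqrDZ x t y :
  ip (x + t *: y) (x + t *: y) = ip x x + 2 * t * ip x y + t ^+ 2 * ip y y.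
Proof. by rewrite ip_sqrD ipZl !ipZr; ring. Qed.

Lemma ip_sqr_eq0_orth x z : ip z z = 0 -> ip x z = 0.
Proof.
move=> zz0; apply/eqP/negPn/negP => xz_neq0.
pose t := - (ip x x + 1) / (2 * ip x z).
have := ip_ge0 (x + t *: z); rewrite ip_sqrDZ zz0 mulr0 addr0.
have -> : 2 * t * ip x z = - (ip x x + 1) by rewrite /t; field.
lra.
Qed.

Lemma ip_lower_bound v d : ip d d <= 1 -> - ((ip v v + 1) / 2) <= ip v d.
Proof. by move=> dd1; have := ip_ge0 (v + d); rewrite ip_sqrD; lra. Qed.

Lemma ip_sqr_segment_le x y t : ip y y <= ip x x -> 0 <= t <= 1 ->
  ip (x + t *: (y - x)) (x + t *: (y - x)) <= ip x x.
Proof.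
move=> yx /andP[t0 t1]; rewrite ip_sqrDZ.
have : ip (x + (y - x)) (x + (y - x)) <= ip x x by rewrite subrKC.
rewrite ip_sqrD; set a := ip x (y - x); set b := ip (y - x) (y - x) => yx'.
have b0 : 0 <= b := ip_ge0 _.
have : 0 <= t * (1 - t) * b by rewrite !mulr_ge0 // subr_ge0.
have : t * (2 * a + b) <= 0 by rewrite mulr_ge0_le0 //; lra.
nra.
Qed.

Section LeastSquares.
Variables (I : finType) (e : I -> V).

Lemma ip_lcomb_orth (S : {set I}) c r :
  (forall k, k \notin S -> c k = 0) -> (forall j, j \in S -> ip r (e j) = 0) ->
  ip r (lcomb e c) = 0.
Proof.
move=> c0 rS; rewrite ip_sumr big1 // => k _; rewrite ipZr.
by have [/rS -> | /c0 ->] := boolP (k \in S); rewrite (mulr0, mul0r).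
Qed.

Lemma exists_orth_residual (S : {set I}) w : exists c : I -> R,
  (forall k, k \notin S -> c k = 0) /\
  (forall j, j \in S -> ip (w + lcomb e c) (e j) = 0).
Proof.
have [n] := ubnP #|S|; elim: n => // n IH in S w *; rewrite ltnS => leSn.
have [S0 | [k kS]] := set_0Vmem S.
  by exists (fun=> 0); split=> // j; rewrite S0 inE.
have ltSkn : (#|S :\ k| < n)%N by apply: leq_trans leSn; rewrite (cardsD1 k S) kS.
have [c [c0 cO]] := IH _ w ltSkn; have [c' [c'0 c'O]] := IH _ (e k) ltSkn.
set r0 := w + lcomb e c in cO; set rk := e k + lcomb e c' in c'O.
(* Gram-Schmidt step: make [r0 + t rk] orthogonal to [rk]. *)
pose t := if ip rk rk == 0 then 0 else - ip r0 rk / ip rk rk.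
have r_rk : ip (r0 + t *: rk) rk = 0.
  rewrite ipDl ipZl /t; case: eqP => [/ip_sqr_eq0_orth -> | /eqP rk0].
    by rewrite mul0r addr0.
  by field.
have r_S0 j : j \in S :\ k -> ip (r0 + t *: rk) (e j) = 0.
  by move=> jS; rewrite ipDl ipZl cO // c'O // mulr0 addr0.
exists (fun j => c j + t * (c' j + (j == k)%:R)); split.
  move=> j jS; have jk : j != k by apply: contraNneq jS => ->.
  have jSk : j \notin S :\ k by rewrite !inE negb_and jS orbT.
  by rewrite c0 // c'0 // (negbTE jk) add0r addr0 mulr0.
have -> : w + lcomb e (fun j => c j + t * (c' j + (j == k)%:R)) = r0 + t *: rk.
  by rewrite lcombD lcombZ lcombD lcomb_delta addrA (addrC (lcomb e c')).
move=> j jS; have [-> | jk] := eqVneq j k; last by apply: r_S0; rewrite !inE jk.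
by move: r_rk; rewrite ipDr (ip_lcomb_orth c'0 r_S0) addr0.
Qed.

Lemma orth_residual_min (S : {set I}) w c c' :
  (forall k, k \notin S -> c k = 0) ->
  (forall j, j \in S -> ip (w + lcomb e c) (e j) = 0) ->
  (forall k, k \notin S -> c' k = 0) ->
  ip (w + lcomb e c) (w + lcomb e c) <= ip (w + lcomb e c') (w + lcomb e c').
Proof.
move=> c0 cO c'0.
have -> : w + lcomb e c' = w + lcomb e c + lcomb e (fun k => c' k - c k).
  by rewrite lcombB -addrA subrKC.
have dS k : k \notin S -> c' k - c k = 0 by move=> kS; rewrite c0 // c'0 // subrr.
by rewrite [X in _ <= X]ip_sqrD (ip_lcomb_orth dS cO) mulr0 addr0 lerDl ip_ge0.
Qed.

Variable w : V.
Local Notation sqres mu := (ip (w + lcomb e mu) (w + lcomb e mu)).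

Lemma nnls_descent (cS : {set I} -> I -> R) :
  (forall (S : {set I}) k, k \notin S -> cS S k = 0) ->
  (forall (S : {set I}) j, j \in S -> ip (w + lcomb e (cS S)) (e j) = 0) ->
  forall (S : {set I}) mu, (forall k, 0 <= mu k) -> (forall k, k \notin S -> mu k = 0) ->
  exists S', (forall k, 0 <= cS S' k) /\ sqres (cS S') <= sqres mu.
Proof.
move=> cS0 cSO S; have [n] := ubnP #|S|; elim: n => // n IH in S *.
rewrite ltnS => leSn mu mu0 muS.
have cS_le : sqres (cS S) <= sqres mu := orth_residual_min (cS0 S) (cSO S) muS.
have [/forallP cS_ge0 | /forallPn[k0]] := boolP [forall k, 0 <= cS S k].
  by exists S.
rewrite -ltNge => ck0.
(* Move from [mu] towards [cS S] until the first coordinate vanishes. *)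
have [j [t [cj t01 nuj nu0]]] := ratio_test mu0 ck0.
pose nu k := mu k + t * (cS S k - mu k).
have jS : j \in S by apply: contraT => /cS0 cj0; move: cj; rewrite cj0 ltxx.
have nuS k : k \notin S :\ j -> nu k = 0.
  rewrite !inE negb_and negbK; have [-> // | _ /= kS] := eqVneq k j.
  by rewrite /nu muS // cS0 // subrr mulr0 addr0.
have [|S' [S'_ge0 S'_le]] := IH (S :\ j) _ nu nu0 nuS.
  by apply: leq_trans leSn; rewrite (cardsD1 j S) jS.
exists S'; split => //; apply: le_trans S'_le _.
have -> : w + lcomb e nu = w + lcomb e mu + t *: (w + lcomb e (cS S) - (w + lcomb e mu)).
  by rewrite lcombD lcombZ lcombB addrA opprD addrACA subrr add0r.
exact: ip_sqr_segment_le.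
Qed.

Lemma nnls_exists : exists mu : I -> R, (forall k, 0 <= mu k) /\
  forall nu, (forall k, 0 <= nu k) -> sqres mu <= sqres nu.
Proof.
have [cS cSP] := choice (fun S => exists_orth_residual S w).
have descent nu : (forall k, 0 <= nu k) ->
    exists S', (forall k, 0 <= cS S' k) /\ sqres (cS S') <= sqres nu.
  move=> nu0; apply: (nnls_descent (fun S => (cSP S).1) (fun S => (cSP S).2)
                               (S := [set: I]%SET) nu0).
  by move=> k; rewrite finset.in_setT.
have [S0 [/forallP S0_ge0 _]] := descent (fun=> 0) (fun=> lexx 0).
have [Sm /forallP Sm_ge0 Sm_min] :=
  arg_minP (fun S => sqres (cS S)) (P := fun S => [forall k, 0 <= cS S k]) S0_ge0.
exists (cS Sm); split => // nu nu0.
have [S' [/forallP S'_ge0 S'_le]] := descent nu nu0.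
exact: le_trans (Sm_min _ S'_ge0) S'_le.
Qed.

Lemma nnls_kkt mu : (forall k, 0 <= mu k) ->
  (forall nu, (forall k, 0 <= nu k) -> sqres mu <= sqres nu) ->
  forall k, 0 <= ip (w + lcomb e mu) (e k) /\ mu k * ip (w + lcomb e mu) (e k) = 0.
Proof.
move=> mu0 mu_min k; set u := w + lcomb e mu.
set a := ip u (e k); have b0 := ip_ge0 (e k); set b := ip (e k) (e k) in b0.
have perturb t : 0 <= mu k + t -> 0 <= t * (2 * a + t * b).
  move=> mkt; have nu0 j : 0 <= mu j + t * (j == k)%:R.
    by have [-> | _] := eqVneq j k; rewrite ?mulr1 // mulr0 addr0.
  move: (mu_min _ nu0); rewrite lcombD lcombZ lcomb_delta addrA ip_sqrDZ -/u -/a -/b.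
  have -> : t * (2 * a + t * b) = 2 * t * a + t ^+ 2 * b by ring.
  lra.
have a_ge0 : 0 <= 2 * a.
  apply: (ge0_of_ge0_near0 ltr01) => t t0 _.
  by rewrite -(pmulr_rge0 _ t0); apply: perturb; have := mu0 k; lra.
split; first lra.
have [-> | mk0] := eqVneq (mu k) 0; first by rewrite mul0r.
have mk : 0 < mu k by rewrite lt0r mk0 mu0.
suff : 0 <= - (2 * a) by move=> ?; rewrite (_ : a = 0) ?mulr0 //; lra.
apply: (ge0_of_ge0_near0 (b := b) mk) => t t0 tmk.
rewrite -(pmulr_rge0 _ t0).
rewrite (_ : t * (- (2 * a) + t * b) = - t * (2 * a + - t * b)); last by ring.
by apply: perturb; lra.
Qed.

End LeastSquares.
End SemiInnerProduct.

Section DescentDirection.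
Variables (R : rcfType) (V : lmodType R) (ip : V -> V -> R).
Hypothesis ipP : semi_inner_product ip.
Variable T : set V.
Hypotheses (T0 : T 0) (T_lin : forall a x y, T x -> T y -> T (a *: x + y)).

Lemma steepest_descent_dir (I : finType) (e : I -> V) v :
  T v -> (forall k, T (e k)) ->
  exists mu : I -> R, (forall k, 0 <= mu k) /\ exists2 d, T d &
    [/\ forall k, ip (e k) d <= 0, ip d d <= 1 &
        ip v d = - Num.sqrt (ip (v + lcomb e mu) (v + lcomb e mu))].
Proof.
move=> Tv Te.
have [mu [mu0 mu_min]] := nnls_exists ipP e v.
have kkt := nnls_kkt ipP mu0 mu_min.
exists mu; split => //; set u := v + lcomb e mu in kkt *.
have T_add x y : T x -> T y -> T (x + y).
  by move=> Tx Ty; rewrite -[x]scale1r; exact: T_lin.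
have Tu : T u.
  apply: (T_add) => //; apply: (big_ind T T0 T_add) => k _.
  by rewrite -[_ *: _]addr0; exact: T_lin.
have vu : ip v u = ip u u.
  rewrite -{1}(addrK (lcomb e mu) v) -/u (ipDl ipP) (ipNl ipP) (ip_suml ipP).
  rewrite big1 ?oppr0 ?addr0 // => k _.
  by rewrite (ipZl ipP) (ipC ipP); exact: (kkt k).2.
have [uu0 | uu_neq0] := eqVneq (ip u u) 0.
  exists 0 => //; rewrite !(ip0r ipP) uu0 sqrtr0 oppr0 ler01; split => // k.
  by rewrite (ip0r ipP).
have s_gt0 : 0 < Num.sqrt (ip u u) by rewrite sqrtr_gt0 lt0r uu_neq0 (ip_ge0 ipP).
have s2 : Num.sqrt (ip u u) ^+ 2 = ip u u by rewrite sqr_sqrtr ?(ip_ge0 ipP).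
set s := Num.sqrt _ in s_gt0 s2 *.
exists ((- s^-1) *: u); first by rewrite -[_ *: u]addr0; exact: T_lin.
split.
- move=> k; rewrite (ipZr ipP) (ipC ipP) mulNr oppr_le0 mulr_ge0 ?invr_ge0 ?(ltW s_gt0) //.
  exact: (kkt k).1.
- by rewrite (ipZl ipP) (ipZr ipP) -s2 (_ : _ * _ = 1) //; field; rewrite gt_eqF.
- by rewrite (ipZr ipP) vu -s2; field; rewrite gt_eqF.
Qed.

Lemma multipliers_descent_dir (I J : finType) (a : I -> V) (b : J -> V)
    (act : pred J) v :
  T v -> (forall i, T (a i)) -> (forall j, T (b j)) ->
  exists (lam : I -> R) (mu : J -> R),
    [/\ forall j, 0 <= mu j, forall j, ~~ act j -> mu j = 0 &
     exists2 d, T d &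
      [/\ forall i, ip (a i) d = 0, forall j, act j -> ip (b j) d <= 0, ip d d <= 1 &
       ip v d = - Num.sqrt (ip (v + lcomb a lam + lcomb b mu)
                               (v + lcomb a lam + lcomb b mu))]].
Proof.
move=> Tv Ta Tb.
(* An equality constraint is a pair of opposite inequalities; inactive ones are dropped. *)
pose e (k : (I + I) + J) : V :=
  match k with inl (inl i) => a i | inl (inr i) => - a i
             | inr j => if act j then b j else 0 end.
have Te k : T (e k).
  case: k => [[i|i]|j] /=; first exact: Ta; last by case: (act j).
  by rewrite -scaleN1r -[_ *: _]addr0; exact: T_lin.
have [nu [nu0 [d Td [ed dd vd]]]] := steepest_descent_dir Tv Te.
pose lam i := nu (inl (inl i)) - nu (inl (inr i)).
pose mu j := if act j then nu (inr j) else 0.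
have lcomb_nu : lcomb e nu = lcomb a lam + lcomb b mu.
  rewrite /lcomb big_sumType big_sumType /= -big_split /=.
  congr (_ + _); apply: eq_bigr => k _; first by rewrite scalerN -scaleNr -scalerDl.
  by rewrite /mu; case: (act k); rewrite ?scaler0 ?scale0r.
exists lam, mu; split.
- by move=> j; rewrite /mu; case: (act j).
- by move=> j /negbTE aj; rewrite /mu aj.
exists d => //; split => //; last by rewrite vd lcomb_nu addrA.
- move=> i; have := ed (inl (inl i)); have := ed (inl (inr i)).
  by rewrite /= (ipNl ipP); lra.
- by move=> j aj; have := ed (inr j); rewrite /= aj.
Qed.

End DescentDirection.

Section InfBound.
Variables (R : realType) (V : lmodType R) (ip : V -> V -> R).
Hypothesis ipP : semi_inner_product ip.
Variable T : set V.
Hypotheses (T0 : T 0) (T_lin : forall a x y, T x -> T y -> T (a *: x + y)).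
Variables (I J : finType) (a : I -> V) (b : J -> V) (act : pred J) (v : V).
Hypotheses (Tv : T v) (Ta : forall i, T (a i)) (Tb : forall j, T (b j)).

Lemma multipliers_of_inf_bound (E : set R) eps :
  (forall d, T d -> (forall i, ip (a i) d = 0) ->
     (forall j, act j -> ip (b j) d <= 0) -> ip d d <= 1 -> E (ip v d)) ->
  (forall r, E r -> exists2 d, ip d d <= 1 & r = ip v d) ->
  `|inf E| <= eps ->
  exists (lam : I -> R) (mu : J -> R),
    [/\ forall j, 0 <= mu j, forall j, ~~ act j -> mu j = 0 &
     Num.sqrt (ip (v + lcomb a lam + lcomb b mu) (v + lcomb a lam + lcomb b mu)) <= eps].
Proof.
move=> E_feas E_dir infE.
have [lam [mu [mu0 mu_act [d Td [ad bd dd vd]]]]] :=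
  multipliers_descent_dir ipP T0 T_lin act Tv Ta Tb.
exists lam, mu; split => //; apply: le_trans infE.
have E_lb : has_lbound E.
  by exists (- ((ip v v + 1) / 2)) => r /E_dir[d' d'd' ->]; exact: ip_lower_bound.
have := ge_inf E_lb (E_feas d Td ad bd dd); rewrite vd.
have := sqrtr_ge0 (ip (v + lcomb a lam + lcomb b mu) (v + lcomb a lam + lcomb b mu)).
set s := Num.sqrt _ => s0 infE_le.
by rewrite ler0_norm; lra.
Qed.

End InfBound.

Lemma sqrtr_le1 (R : rcfType) (x : R) : (Num.sqrt x <= 1) = (x <= 1).
Proof. by rewrite -{1}sqrtr1 ler_sqrt // ler01. Qed.

Lemma fst_sum (U W : zmodType) (I : finType) (F : I -> U * W) :
  (\sum_i F i).1 = \sum_i (F i).1.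
Proof. exact: (big_morph fst (fun _ _ => erefl) erefl). Qed.

Lemma snd_sum (U W : zmodType) (I : finType) (F : I -> U * W) :
  (\sum_i F i).2 = \sum_i (F i).2.
Proof. exact: (big_morph snd (fun _ _ => erefl) erefl). Qed.

Lemma inner_semi_inner_product (R : realType) (K : nat) : semi_inner_product (@inner R K).
Proof.
rewrite /inner; split => [u v w | t u w | u v | u].
- by rewrite -big_split; apply: eq_bigr => i _; rewrite !mxE mulrDl.
- by rewrite mulr_sumr; apply: eq_bigr => i _; rewrite !mxE mulrA.
- by apply: eq_bigr => i _; rewrite mulrC.
- by apply: sumr_ge0 => i _; rewrite -expr2 sqr_ge0.
Qed.

Lemma pinner_semi_inner_product (R : realType) (K n : nat) : semi_inner_product (@pinner R K n).
Proof.
have ipP k := inner_semi_inner_product R k; rewrite /pinner.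
split => [u v w | t u w | u v | u] /=.
- by rewrite !(ipDl (ipP _)) addrACA.
- by rewrite !(ipZl (ipP _)) mulrDr.
- by rewrite (ipC (ipP _) u.1) (ipC (ipP _) u.2).
- by rewrite addr_ge0 ?(ip_ge0 (ipP _)).
Qed.

Section Tangent.
Variables (R : realType) (K : nat) (M : set 'rV[R]_K) (x : 'rV[R]_K).


Lemma tangent0 : tangent M x 0.
Proof. by move=> m h U [[_ Ux] dh _ _ _]; rewrite (deriveE _ (dh x Ux)) linear0. Qed.

Lemma tangent_lin t u w : tangent M x u -> tangent M x w -> tangent M x (t *: u + w).
Proof.
move=> Tu Tw m h U hU; have [[_ Ux] dh _ _ _] := hU.
rewrite (deriveE _ (dh x Ux)) linearD linearZZ -!(deriveE _ (dh x Ux)).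
by rewrite (Tu _ _ _ hU) (Tw _ _ _ hU) scaler0 addr0.
Qed.

Lemma rgrad_tangent F : tangent M x (rgrad M F x).
Proof. by rewrite /rgrad; case: xgetP => [y _ [] | _] //; exact: tangent0. Qed.

Lemma pgrad_ptangent n (F : 'rV[R]_K -> 'rV[R]_n -> R) y : ptangent M x (pgrad M F x y).
Proof. by rewrite /pgrad; case: xgetP => [z _ [] | _] //; exact: tangent0. Qed.

End Tangent.

Section Measures.
Variables (R : realType) (K n p s : nat) (M : set 'rV[R]_K).
Variables (f : 'rV[R]_K -> 'rV[R]_n -> R) (c : 'I_p -> 'rV[R]_K -> 'rV[R]_n -> R).
Variables (g : 'I_s -> 'rV[R]_n -> R) (xs : 'rV[R]_K) (ys : 'rV[R]_n) (eps : R).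

Lemma multipliers_x_of_m_x : m_x M f c xs ys <= eps ->
  exists lam : 'I_p -> R,
    enorm (rgrad M (f ^~ ys) xs + \sum_(i < p) lam i *: rgrad M (c i ^~ ys) xs) <= eps.
Proof.
move=> mx.
have [| r [d [_ _ dd ->]] | lam [mu [_ _ res_le]]] := multipliers_of_inf_bound
  (inner_semi_inner_product R K) (@tangent0 _ _ M xs) (@tangent_lin _ _ M xs)
  (b := fun j : 'I_0 => 0) (act := pred0) (@rgrad_tangent _ _ M xs (f ^~ ys))
  (fun i => @rgrad_tangent _ _ M xs (c i ^~ ys)) (fun=> @tangent0 _ _ M xs) _ _ mx.
- by move=> d Td ad _ dd; exists d; split; rewrite // /enorm sqrtr_le1.
- by exists d; rewrite // -sqrtr_le1.
by exists lam; rewrite /lcomb big_ord0 addr0 in res_le.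
Qed.

Lemma multipliers_y_of_m_y : m_y f c g xs ys <= eps ->
  exists (lam' : 'I_p -> R) (mu : 'I_s -> R), (forall j, 0 <= mu j) /\
    enorm (egrad (f xs) ys + \sum_(i < p) lam' i *: egrad (c i xs) ys
           + \sum_(j < s) mu j *: egrad (g j) ys) <= eps /\
    (forall j, mu j * g j ys = 0).
Proof.
move=> my.
have [| r [d [_ _ dd ->]] | lam [mu [mu0 mu_act res_le]]] :=
  multipliers_of_inf_bound (inner_semi_inner_product R n) (T := setT) Logic.I
  (fun _ _ _ _ _ => Logic.I) (a := fun i => egrad (c i xs) ys)
  (b := fun j => egrad (g j) ys) (act := fun j => g j ys == 0) (v := egrad (f xs) ys)
  Logic.I (fun=> Logic.I) (fun=> Logic.I) _ _ my.
- move=> d _ ad bd dd; exists d; split; rewrite // /enorm ?sqrtr_le1 //.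
  by move=> j /eqP; exact: bd.
- by exists d; rewrite // -sqrtr_le1.
exists lam, mu; split=> //; split=> // j.
by have [-> | /mu_act ->] := eqVneq (g j ys) 0; rewrite (mulr0, mul0r).
Qed.

Lemma approx_KKT_of_m_KKT : m_KKT M f c g xs ys <= eps -> approx_KKT M f c g eps xs ys.
Proof.
move=> mkkt.
have [| r [d [_ _ _ dd ->]] | lam [mu [mu0 mu_act res_le]]] :=
  multipliers_of_inf_bound (pinner_semi_inner_product R K n) (T := ptangent M xs)
  (@tangent0 _ _ M xs) (fun t u w => @tangent_lin _ _ M xs t u.1 w.1)
  (act := fun j => g j ys == 0) (@pgrad_ptangent _ _ M xs _ f ys)
  (fun i => @pgrad_ptangent _ _ M xs _ (c i) ys)
  (fun j => @pgrad_ptangent _ _ M xs _ (fun=> g j) ys) _ _ mkkt.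
- move=> d Td ad bd dd; exists d; split; rewrite // /pnorm ?sqrtr_le1 //.
  by move=> j /eqP; exact: bd.
- by exists d; rewrite // -sqrtr_le1.
exists lam, mu; split=> //; split; last first.
  by move=> j; have [-> | /mu_act ->] := eqVneq (g j ys) 0; rewrite (mulr0, mul0r).
by move: res_le; rewrite /pnorm /lcomb [X in pinner X X]surjective_pairing /= !fst_sum !snd_sum.
Qed.

End Measures.

Theorem proposition4 (R : realType) (K n p s : nat) (M : set 'rV[R]_K)
    (f : 'rV[R]_K -> 'rV[R]_n -> R) (c : 'I_p -> 'rV[R]_K -> 'rV[R]_n -> R)
    (g : 'I_s -> 'rV[R]_n -> R) (xs : 'rV[R]_K) (ys : 'rV[R]_n) (eps : R) :
  is_submanifold M ->
  (forall z : 'rV[R]_K * 'rV[R]_n, differentiable (fun w => f w.1 w.2) z) ->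
  (forall i (z : 'rV[R]_K * 'rV[R]_n), differentiable (fun w => c i w.1 w.2) z) ->
  (forall j (y : 'rV[R]_n), differentiable (g j) y) ->
  M xs -> (forall i, c i xs ys = 0) -> (forall j, g j ys <= 0) ->
  LICQ M c g xs ys ->
  0 <= eps ->
  (Num.max (m_x M f c xs ys) (m_y f c g xs ys) <= eps ->
     approx_stationary M f c g eps xs ys) /\
  (m_KKT M f c g xs ys <= eps -> approx_KKT M f c g eps xs ys).
Proof.
move=> _ _ _ _ _ _ _ _ _; split; last exact: approx_KKT_of_m_KKT.
rewrite ge_max => /andP[mx my].
by split; [exact: multipliers_x_of_m_x | exact: multipliers_y_of_m_y].
Qed.
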